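(* Let $a_2,a_5$ be real constants, not both zero, and $k_1,k_3$ real constants. On the region where $r=\sqrt{x^2+y^2}>0$ and $a_2y-a_5x\neq0$, let $$V=\frac{k_1}{(a_2y-a_5x)^2}+\frac{k_3(a_2x+a_5y)}{r(a_2y-a_5x)^2},$$ let $L=x\dot y-y\dot x$, and let $$K=(a_2\dot x+a_5\dot y)L^2+\frac{2k_1r^2}{(a_2y-a_5x)^2}(a_2\dot x+a_5\dot y)+\frac{k_3r}{a_2y-a_5x}(a_2\dot y-a_5\dot x)-\frac{k_3(a_2x+a_5y)}{r(a_2y-a_5x)}L+\frac{2k_3(a_2x+a_5y)r}{(a_2y-a_5x)^2}(a_2\dot x+a_5\dot y).$$ Then the time-dependent function $$J=-tK+(a_2x+a_5y)L^2+\frac{2k_1r^2(a_2x+a_5y)}{(a_2y-a_5x)^2}+\frac{2k_3r(a_2x+a_5y)^2}{(a_2y-a_5x)^2}+k_3r$$ is a first integral of $\ddot x=-V_{,x}$, $\ddot y=-V_{,y}$.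
   Context: A first integral is a function of $(t,x,y,\dot x,\dot y)$ whose total time derivative vanishes along every solution of the given equations of motion. *)

From Stdlib Require Import Reals.
From Coquelicot Require Import Coquelicot.
Open Scope R_scope.

Definition rad (x y : R) : R := sqrt (x ^ 2 + y ^ 2).

Definition Vpot (a2 a5 k1 k3 : R) (x y : R) : R :=
  k1 / (a2 * y - a5 * x) ^ 2
  + k3 * (a2 * x + a5 * y) / (rad x y * (a2 * y - a5 * x) ^ 2).

Definition Lmom (x y vx vy : R) : R := x * vy - y * vx.

Definition Kfun (a2 a5 k1 k3 : R) (x y vx vy : R) : R :=
  let r := rad x y in
  let D := a2 * y - a5 * x in
  let L := Lmom x y vx vy in
  (a2 * vx + a5 * vy) * L ^ 2
  + 2 * k1 * r ^ 2 / D ^ 2 * (a2 * vx + a5 * vy)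
  + k3 * r / D * (a2 * vy - a5 * vx)
  - k3 * (a2 * x + a5 * y) / (r * D) * L
  + 2 * k3 * (a2 * x + a5 * y) * r / D ^ 2 * (a2 * vx + a5 * vy).

Definition Jfun (a2 a5 k1 k3 : R) (t x y vx vy : R) : R :=
  let r := rad x y in
  let D := a2 * y - a5 * x in
  let L := Lmom x y vx vy in
  - t * Kfun a2 a5 k1 k3 x y vx vy
  + (a2 * x + a5 * y) * L ^ 2
  + 2 * k1 * r ^ 2 * (a2 * x + a5 * y) / D ^ 2
  + 2 * k3 * r * (a2 * x + a5 * y) ^ 2 / D ^ 2
  + k3 * r.

From Stdlib Require Import Reals Lra.
From Coquelicot Require Import Coquelicot.
Open Scope R_scope.

(* The first integral has the shape  J(t) = - t K + F  where
   F = S L^2 + 2 k1 r^2 S / D^2 + 2 k3 r S^2 / D^2 + k3 r,  with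
   S = a2 x + a5 y,  D = a2 y - a5 x.  Such a J is conserved as soon as
   (1) K is itself a first integral, and
   (2) the time derivative of F along the motion is K,
   since then  dJ/dt = - K - t * 0 + K = 0  (lemma [time_dependent_integral]). *)

(* [auto_derive] leaves derivatives of unknown functions in eta-expanded form. *)
Lemma Derive_eta (f : R -> R) (t l : R) :
  is_derive f t l -> Derive (fun s => f s) t = l.
Proof. exact (is_derive_unique f t l). Qed.

Lemma time_dependent_integral (K F : R -> R) (t : R) :
  is_derive K t 0 -> is_derive F t (K t) ->
  is_derive (fun s => - s * K s + F s) t 0.
Proof.
  intros HK HF.
  auto_derive; [repeat split; eexists; eassumption |].
  rewrite (Derive_eta _ _ _ HK), (Derive_eta _ _ _ HF); ring.
Qed.

(* A positive radius forces x^2 + y^2 > 0, which licenses differentiating the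
   square root and cancelling r^2 = x^2 + y^2. *)
Lemma rad_pos_sum_sq (x y : R) : rad x y > 0 -> 0 < x ^ 2 + y ^ 2.
Proof.
  unfold rad; intros Hr.
  destruct (Rle_lt_dec (x ^ 2 + y ^ 2) 0) as [Hle | Hlt]; [| exact Hlt].
  rewrite sqrt_neg_0 in Hr by exact Hle; lra.
Qed.

Lemma pow_SS_of_square (r s : R) (n : nat) :
  r * r = s -> r ^ S (S n) = s * r ^ n.
Proof. intros Hs; rewrite <- Hs; simpl; ring. Qed.

(* [auto_derive] writes x^2 + y^2 as x*(x*1) + y*(y*1) under the root. *)
Ltac fold_radius :=
  repeat match goal with
  | |- context [sqrt (?a * (?a * 1) + ?b * (?b * 1))] =>
      replace (a * (a * 1) + b * (b * 1)) with (a ^ 2 + b ^ 2) by ring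
  end.

Ltac nonzero_product :=
  repeat apply Rmult_integral_contrapositive_currified; try (intro; lra).

(* Proves a goal  e = 0  with e rational in x, y and r = sqrt (x^2 + y^2),
   whose denominators are products of r and D <> 0 (hypothesis HD): clear
   denominators, then reduce the numerator modulo r^2 = x^2 + y^2. *)
Ltac radical_field HD :=
  match goal with
  | |- context [sqrt (?a ^ 2 + ?b ^ 2)] =>
      let r := fresh "r" in let Hrr := fresh "Hrr" in
      set (r := sqrt (a ^ 2 + b ^ 2)) in *;
      assert (Hrr : r * r = a ^ 2 + b ^ 2) by (apply sqrt_sqrt; lra);
      clearbody r;
      field_simplify;
      [ unfold Rdiv; apply Rmult_eq_0_compat_r;
        repeat rewrite (pow_SS_of_square _ _ _ Hrr); ring
      | split; [intro; apply HD; lra | lra] ]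
  end.

Definition gradVx (a2 a5 k1 k3 x y : R) : R :=
  let r := rad x y in let D := a2 * y - a5 * x in let S := a2 * x + a5 * y in
  2 * k1 * a5 / D ^ 3
  + k3 * (a2 / (r * D ^ 2) - S * x / (r ^ 3 * D ^ 2) + 2 * a5 * S / (r * D ^ 3)).

Definition gradVy (a2 a5 k1 k3 x y : R) : R :=
  let r := rad x y in let D := a2 * y - a5 * x in let S := a2 * x + a5 * y in
  - 2 * k1 * a2 / D ^ 3
  + k3 * (a5 / (r * D ^ 2) - S * y / (r ^ 3 * D ^ 2) - 2 * a2 * S / (r * D ^ 3)).

Lemma Vpot_dx (a2 a5 k1 k3 x y : R) : rad x y > 0 -> a2 * y - a5 * x <> 0 ->
  Derive (fun u => Vpot a2 a5 k1 k3 u y) x = gradVx a2 a5 k1 k3 x y.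
Proof.
  intros Hr HD; pose proof (rad_pos_sum_sq _ _ Hr) as Hs.
  apply is_derive_unique; unfold gradVx, Vpot, rad in *; auto_derive; fold_radius.
  - repeat split; auto; nonzero_product.
  - field; split; [exact HD | lra].
Qed.

Lemma Vpot_dy (a2 a5 k1 k3 x y : R) : rad x y > 0 -> a2 * y - a5 * x <> 0 ->
  Derive (fun u => Vpot a2 a5 k1 k3 x u) y = gradVy a2 a5 k1 k3 x y.
Proof.
  intros Hr HD; pose proof (rad_pos_sum_sq _ _ Hr) as Hs.
  apply is_derive_unique; unfold gradVy, Vpot, rad in *; auto_derive; fold_radius.
  - repeat split; auto; nonzero_product.
  - field; split; [exact HD | lra].
Qed.

Definition Fpart (a2 a5 k1 k3 x y vx vy : R) : R :=
  let r := rad x y in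
  let D := a2 * y - a5 * x in
  let S := a2 * x + a5 * y in
  S * Lmom x y vx vy ^ 2 + 2 * k1 * r ^ 2 * S / D ^ 2
  + 2 * k3 * r * S ^ 2 / D ^ 2 + k3 * r.

Lemma Jfun_split (a2 a5 k1 k3 t x y vx vy : R) :
  Jfun a2 a5 k1 k3 t x y vx vy
  = - t * Kfun a2 a5 k1 k3 x y vx vy + Fpart a2 a5 k1 k3 x y vx vy.
Proof. unfold Jfun, Fpart; ring. Qed.

Section Trajectory.

Variables a2 a5 k1 k3 t : R.
Variables x y vx vy : R -> R.
Hypothesis Hr : rad (x t) (y t) > 0.
Hypothesis HD : a2 * y t - a5 * x t <> 0.
Hypothesis Hx : is_derive x t (vx t).
Hypothesis Hy : is_derive y t (vy t).
Hypothesis Hvx : is_derive vx t (- Derive (fun u => Vpot a2 a5 k1 k3 u (y t)) (x t)).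
Hypothesis Hvy : is_derive vy t (- Derive (fun u => Vpot a2 a5 k1 k3 (x t) u) (y t)).

Lemma accel_x : is_derive vx t (- gradVx a2 a5 k1 k3 (x t) (y t)).
Proof. rewrite <- Vpot_dx by assumption; exact Hvx. Qed.

Lemma accel_y : is_derive vy t (- gradVy a2 a5 k1 k3 (x t) (y t)).
Proof. rewrite <- Vpot_dy by assumption; exact Hvy. Qed.

Lemma K_conserved :
  is_derive (fun s => Kfun a2 a5 k1 k3 (x s) (y s) (vx s) (vy s)) t 0.
Proof.
  pose proof (rad_pos_sum_sq _ _ Hr) as Hs.
  pose proof accel_x as Ax; pose proof accel_y as Ay.
  unfold Kfun, Lmom, gradVx, gradVy, rad in *; auto_derive; fold_radius.
  - repeat split; first [eexists; eassumption | lra | nonzero_product].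
  - rewrite (Derive_eta _ _ _ Hx), (Derive_eta _ _ _ Hy),
      (Derive_eta _ _ _ Ax), (Derive_eta _ _ _ Ay).
    radical_field HD.
Qed.

Lemma Fpart_rate :
  is_derive (fun s => Fpart a2 a5 k1 k3 (x s) (y s) (vx s) (vy s)) t
    (Kfun a2 a5 k1 k3 (x t) (y t) (vx t) (vy t)).
Proof.
  pose proof (rad_pos_sum_sq _ _ Hr) as Hs.
  pose proof accel_x as Ax; pose proof accel_y as Ay.
  unfold Fpart, Kfun, Lmom, gradVx, gradVy, rad in *; auto_derive; fold_radius.
  - repeat split; first [eexists; eassumption | lra | nonzero_product].
  - rewrite (Derive_eta _ _ _ Hx), (Derive_eta _ _ _ Hy),
      (Derive_eta _ _ _ Ax), (Derive_eta _ _ _ Ay).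
    apply Rminus_diag_uniq.
    radical_field HD.
Qed.

End Trajectory.

Theorem mainTheorem8 (a2 a5 k1 k3 : R) (Ha : a2 <> 0 \/ a5 <> 0)
  (t0 t1 : R) (x y vx vy : R -> R)
  (Hreg : forall t, t0 < t < t1 ->
     rad (x t) (y t) > 0 /\ a2 * y t - a5 * x t <> 0)
  (Hx : forall t, t0 < t < t1 -> is_derive x t (vx t))
  (Hy : forall t, t0 < t < t1 -> is_derive y t (vy t))
  (Hvx : forall t, t0 < t < t1 ->
     is_derive vx t (- Derive (fun u => Vpot a2 a5 k1 k3 u (y t)) (x t)))
  (Hvy : forall t, t0 < t < t1 ->
     is_derive vy t (- Derive (fun u => Vpot a2 a5 k1 k3 (x t) u) (y t))) :
  forall t, t0 < t < t1 ->
    is_derive (fun s => Jfun a2 a5 k1 k3 s (x s) (y s) (vx s) (vy s)) t 0.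
Proof.
  intros t Ht.
  destruct (Hreg t Ht) as [Hr HD].
  specialize (Hx t Ht); specialize (Hy t Ht).
  specialize (Hvx t Ht); specialize (Hvy t Ht).
  apply (is_derive_ext (fun s => - s * Kfun a2 a5 k1 k3 (x s) (y s) (vx s) (vy s)
                                 + Fpart a2 a5 k1 k3 (x s) (y s) (vx s) (vy s))).
  { intro s; symmetry; apply Jfun_split. }
  apply time_dependent_integral.
  - apply K_conserved; assumption.
  - apply Fpart_rate; assumption.
Qed.
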